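(* Let $(A,\circ)$ be a permutative algebra and let $(A[[\hbar]],\triangleright_{\hbar},\triangleleft_{\hbar})$ be a diassociative formal deformation of $A$, given by bilinear operations $\triangleright_i,\triangleleft_i:A\otimes A\to A$ ($i\geq 0$). Define a bilinear operation $[\cdot,\cdot]:A\otimes A\to A$ by $[x,y]=x\triangleright_1 y-y\triangleleft_1 x$ for all $x,y\in A$. Then $(A,\circ,[\cdot,\cdot])$ is a dual pre-Poisson algebra.
   Context: Work over a field $\mathbb{F}$ of characteristic $0$. A permutative algebra is a vector space with a bilinear product $\circ$ satisfying $x\circ(y\circ z)=(x\circ y)\circ z=(y\circ x)\circ z$. A dialgebra (diassociative algebra) over a commutative ring is a module with two associative bilinear products $\triangleright,\triangleleft$ satisfying $(x\triangleleft y)\triangleleft z=x\triangleleft(y\triangleright z)$, $(x\triangleright y)\triangleleft z=x\triangleright(y\triangleleft z)$, $(x\triangleleft y)\triangleright z=x\triangleright(y\triangleright z)$. A diassociative formal deformation of a permutative algebra $(A,\circ)$ is a sequence of bilinear operations $\triangleright_i,\triangleleft_i:A\otimes A\to A$, $i\geq0$, with $x\triangleright_0 y:=x\circ y=:y\triangleleft_0 x$ for all $x,y\in A$, such that $(A[[\hbar]],\triangleright_\hbar,\triangleleft_\hbar)$ is a dialgebra over $\mathbb{F}[[\hbar]]$, where $\triangleright_\hbar,\triangleleft_\hbar$ are the $\mathbb{F}[[\hbar]]$-bilinear operations determined by $x\triangleright_\hbar y=\sum_{i\ge0}(x\triangleright_i y)\hbar^i$ and $x\triangleleft_\hbar y=\sum_{i\ge0}(x\triangleleft_i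 y)\hbar^i$ for $x,y\in A$. A dual pre-Poisson algebra is a vector space $A$ with bilinear operations $\circ,[\cdot,\cdot]$ such that $(A,\circ)$ is permutative, $[x,[y,z]]=[[x,y],z]+[y,[x,z]]$, $[x,y\circ z]=[x,y]\circ z+y\circ[x,z]$, $[x\circ y,z]=x\circ[y,z]+y\circ[x,z]$ and $[x,y]\circ z=-[y,x]\circ z$ for all $x,y,z$. *)

From HB Require Import structures.
From mathcomp Require Import all_boot all_order all_algebra.
Set Implicit Arguments. Unset Strict Implicit. Unset Printing Implicit Defensive.
Import GRing.Theory.
Local Open Scope ring_scope.

Section Defs.
Variables (F : fieldType) (A : lmodType F).

Definition bilinear_op (f : A -> A -> A) : Prop :=
  (forall (a : F) (x y z : A), f (a *: x + y) z = a *: f x z + f y z) /\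
  (forall (a : F) (x y z : A), f z (a *: x + y) = a *: f z x + f z y).

Definition permutative (mul : A -> A -> A) : Prop :=
  bilinear_op mul /\
  forall x y z : A,
    mul x (mul y z) = mul (mul x y) z /\ mul (mul x y) z = mul (mul y x) z.

(* A[[h]] is modelled as sequences of coefficients nat -> A. *)
Definition hseries := nat -> A.

(* The F[[h]]-bilinear operation determined by x op_h y = sum_i (x op_i y) h^i
   for x, y in A: on series, coefficient n of (x op_h y) is
   sum_{i + j + k = n} (x_j op_i y_k). *)
Definition hop (op : nat -> A -> A -> A) (x y : hseries) : hseries :=
  fun n => \sum_(i < n.+1) \sum_(j < (n - i).+1) op i (x j) (y (n - i - j)%N).

(* dialgebra axioms for (A[[h]], |>, <|) ; the operations are F[[h]]-bilinear
   by construction (hop is the F[[h]]-bilinear extension), so only the identities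
   are required here. *)
Definition hdialgebra (rt lt : hseries -> hseries -> hseries) : Prop :=
  forall x y z : hseries,
    [/\ rt (rt x y) z = rt x (rt y z),
        lt (lt x y) z = lt x (lt y z),
        lt (lt x y) z = lt x (rt y z),
        lt (rt x y) z = rt x (lt y z)
      & rt (lt x y) z = rt x (rt y z)].

Definition diass_formal_deformation (mul : A -> A -> A)
    (rt lt : nat -> A -> A -> A) : Prop :=
  [/\ forall i, bilinear_op (rt i),
      forall i, bilinear_op (lt i),
      forall x y, rt 0%N x y = mul x y,
      forall x y, lt 0%N y x = mul x y
    & hdialgebra (hop rt) (hop lt)].

Definition dual_pre_Poisson (mul br : A -> A -> A) : Prop :=
  [/\ permutative mul /\ bilinear_op br,
      forall x y z, br x (br y z) = br (br x y) z + br y (br x z),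
      forall x y z, br x (mul y z) = mul (br x y) z + mul y (br x z),
      forall x y z, br (mul x y) z = mul x (br y z) + mul y (br x z)
    & forall x y z, mul (br x y) z = - mul (br y x) z].

End Defs.

From HB Require Import structures.
From mathcomp Require Import all_boot all_order all_algebra.
Import GRing.Theory.
Local Open Scope ring_scope.
Set Implicit Arguments. Unset Strict Implicit. Unset Printing Implicit Defensive.

(* Evaluating the dialgebra identities of (A[[h]], |>_h, <|_h) on constant series
   x, y, z and comparing coefficients of h^n gives, for each of the five axioms,
   an identity between sums of composites of the |>_i and <|_i.  At order 1, where
   |>_0 and <|_0 are o and its opposite, these are relations between o, |>_1 and
   <|_1; each Leibniz rule and the skew-symmetry of [x, y] o z is a signed sum of
   three or four of them.  At order 2 they also involve |>_2 and <|_2, and the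
   Jacobi identity is a signed sum of six of them in which those terms cancel. *)

Inductive zexpr := ZAtom of nat | ZZero | ZAdd of zexpr & zexpr | ZOpp of zexpr.

Fixpoint coefs_add (s t : seq int) : seq int :=
  match s, t with
  | [::], _ => t
  | _, [::] => s
  | a :: s', b :: t' => (a + b) :: coefs_add s' t'
  end.

Fixpoint zexpr_coefs (e : zexpr) : seq int :=
  match e with
  | ZAtom n => rcons (nseq n 0) 1
  | ZZero => [::]
  | ZAdd a b => coefs_add (zexpr_coefs a) (zexpr_coefs b)
  | ZOpp a => map -%R (zexpr_coefs a)
  end.

Section ZmodNormalization.
Variable V : zmodType.
Implicit Types (env : seq V) (s t : seq int).

Fixpoint zexpr_eval env e : V :=
  match e with
  | ZAtom n => nth 0 env n
  | ZZero => 0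
  | ZAdd a b => zexpr_eval env a + zexpr_eval env b
  | ZOpp a => - zexpr_eval env a
  end.

Fixpoint coefs_eval env s : V :=
  if s is c :: s' then head 0 env *~ c + coefs_eval (behead env) s' else 0.

Lemma coefs_eval_add env s t :
  coefs_eval env (coefs_add s t) = coefs_eval env s + coefs_eval env t.
Proof.
elim: s env t => [|a s IHs] env [|b t] /=; rewrite ?addr0 ?add0r //.
by rewrite IHs mulrzDr addrACA.
Qed.

Lemma coefs_eval_opp env s : coefs_eval env (map -%R s) = - coefs_eval env s.
Proof. by elim: s env => [|a s IHs] env /=; rewrite ?oppr0 // IHs mulrNz opprD. Qed.

Lemma coefs_eval_nil s : coefs_eval [::] s = 0.
Proof. by elim: s => //= c s ->; rewrite mul0rz addr0. Qed.

Lemma coefs_eval_atom env n : coefs_eval env (rcons (nseq n 0) 1) = nth 0 env n.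
Proof.
elim: n env => [|n IHn] [|v env] /=; rewrite ?coefs_eval_nil ?nth_nil //.
- by rewrite mul0rz add0r.
- by rewrite mulr1z addr0.
- by rewrite mul0rz add0r.
- by rewrite mulr0z add0r IHn.
Qed.

Lemma zexpr_eval_coefs env e : zexpr_eval env e = coefs_eval env (zexpr_coefs e).
Proof.
elim: e => [n||a IHa b IHb|a IHa] /=.
- by rewrite coefs_eval_atom.
- by [].
- by rewrite coefs_eval_add IHa IHb.
- by rewrite coefs_eval_opp IHa.
Qed.

Lemma coefs_eval_eq0 env s : all (eq_op^~ 0) s -> coefs_eval env s = 0.
Proof.
elim: s env => [|c s IHs] env //= /andP[/eqP-> s0].
by rewrite mulr0z add0r IHs.
Qed.

Lemma zexpr_eval_eq env a b :
  all (eq_op^~ 0) (zexpr_coefs (ZAdd a (ZOpp b))) ->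
  zexpr_eval env a = zexpr_eval env b.
Proof.
move=> ab0; apply/eqP; rewrite -subr_eq0; apply/eqP.
by rewrite -[_ - _]/(zexpr_eval env (ZAdd a (ZOpp b))) zexpr_eval_coefs coefs_eval_eq0.
Qed.

Lemma eq_of_subr_eq (L R l r : V) : l = r -> L - R = l - r -> L = R.
Proof. by move=> ->; rewrite subrr => /subr0_eq. Qed.

End ZmodNormalization.

(* Atoms are compared up to conversion: rewriting with different lemmas can
   leave the same term with different, convertible structure instances. *)
Ltac zexpr_atom_in x l :=
  lazymatch l with
  | nil => constr:(false)
  | cons ?y ?l' =>
      match constr:(tt) with
      | _ => constr:(ltac:(unify x y; exact true) : bool)
      | _ => zexpr_atom_in x l'
      end
  end.

Ltac zexpr_atoms t l :=
  lazymatch t with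
  | (?a + ?b)%R => let l := zexpr_atoms a l in zexpr_atoms b l
  | (- ?a)%R => zexpr_atoms a l
  | 0%R => l
  | _ => lazymatch zexpr_atom_in t l with
         | true => l
         | false => constr:(cons t l)
         end
  end.

Ltac zexpr_atom_index x l :=
  lazymatch l with
  | cons ?y ?l' =>
      match constr:(tt) with
      | _ => constr:(ltac:(unify x y; exact 0%N) : nat)
      | _ => let n := zexpr_atom_index x l' in constr:(S n)
      end
  end.

Ltac zexpr_reify t l :=
  lazymatch t with
  | (?a + ?b)%R =>
      let ra := zexpr_reify a l in let rb := zexpr_reify b l in constr:(ZAdd ra rb)
  | (- ?a)%R => let ra := zexpr_reify a l in constr:(ZOpp ra)
  | 0%R => constr:(ZZero)
  | _ => let n := zexpr_atom_index t l in constr:(ZAtom n)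
  end.

(* Proves an identity between sums and differences of arbitrary terms in a
   zmodType, treating the summands as atoms. *)
Ltac zmod_eq :=
  lazymatch goal with |- @eq ?V ?a ?b =>
    let l := zexpr_atoms a (@nil V) in
    let l := zexpr_atoms b l in
    let ra := zexpr_reify a l in
    let rb := zexpr_reify b l in
    apply: (@zexpr_eval_eq _ l ra rb); vm_compute; reflexivity
  end.

(* On a goal [l1 = r1 -> ... -> ln = rn -> L = R], proves [L = R] as the sum of
   the premises. *)
Ltac sum_eqs :=
  lazymatch goal with
  | |- _ = _ -> _ = _ -> _ =>
      let E1 := fresh in let E2 := fresh in
      move=> E1 E2; move: (congr2 +%R E1 E2); clear E1 E2; sum_eqs
  | |- _ = _ -> _ =>
      let E := fresh in move=> E; apply: (eq_of_subr_eq E); zmod_eq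
  end.

Section Bilinear.
Variables (F : fieldType) (A : lmodType F).
Implicit Types (f g : A -> A -> A) (x y z : A).

Lemma bilinear_opBl f : bilinear_op f -> forall x y z, f (x - y) z = f x z - f y z.
Proof. by case=> fl _ x y z; rewrite addrC -[- y]scaleN1r fl scaleN1r addrC. Qed.

Lemma bilinear_opBr f : bilinear_op f -> forall x y z, f z (x - y) = f z x - f z y.
Proof. by case=> _ fr x y z; rewrite addrC -[- y]scaleN1r fr scaleN1r addrC. Qed.

Lemma bilinear_op0l f : bilinear_op f -> forall z, f 0 z = 0.
Proof. by move=> fB z; have := bilinear_opBl fB z z z; rewrite !subrr. Qed.

Lemma bilinear_op0r f : bilinear_op f -> forall z, f z 0 = 0.
Proof. by move=> fB z; have := bilinear_opBr fB z z z; rewrite !subrr. Qed.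

Lemma bilinear_opB f g :
  bilinear_op f -> bilinear_op g -> bilinear_op (fun x y => f x y - g x y).
Proof.
by case=> fl fr [gl gr]; split=> a x y z; rewrite ?(fl, gl, fr, gr) scalerBr; zmod_eq.
Qed.

Lemma bilinear_op_flip f : bilinear_op f -> bilinear_op (fun x y => f y x).
Proof. by case=> fl fr; split. Qed.

End Bilinear.

Section ConstantSeries.
Variables (F : fieldType) (A : lmodType F).
Implicit Types (op : nat -> A -> A -> A) (x y z : A).

Definition hconst x : hseries A := fun n => if n is 0%N then x else 0.

Lemma hop_constl op x v n : (forall i, bilinear_op (op i)) ->
  hop op (hconst x) v n = \sum_(i < n.+1) op i x (v (n - i)%N).
Proof.
move=> opB; apply: eq_bigr => i _; rewrite big_ord_recl subn0 big1 ?addr0 // => j _.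
exact: bilinear_op0l.
Qed.

Lemma hop_constr op u z n : (forall i, bilinear_op (op i)) ->
  hop op u (hconst z) n = \sum_(i < n.+1) op i (u (n - i)%N) z.
Proof.
move=> opB; apply: eq_bigr => i _; rewrite big_ord_recr /= subnn big1 ?add0r // => j _.
by rewrite -(prednK (_ : 0 < n - i - j)%N) ?subn_gt0 // bilinear_op0r.
Qed.

Lemma hop_const op x y n : (forall i, bilinear_op (op i)) ->
  hop op (hconst x) (hconst y) n = op n x y.
Proof.
move=> opB; rewrite hop_constl // big_ord_recr /= subnn big1 ?add0r // => i _.
by rewrite -(prednK (_ : 0 < n - i)%N) ?subn_gt0 // bilinear_op0r.
Qed.

Lemma hop_const_assocl op op' x y z n :
    (forall i, bilinear_op (op i)) -> (forall i, bilinear_op (op' i)) ->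
  hop op (hop op' (hconst x) (hconst y)) (hconst z) n
    = \sum_(i < n.+1) op i (op' (n - i)%N x y) z.
Proof. by move=> opB op'B; rewrite hop_constr //; under eq_bigr do rewrite hop_const //. Qed.

Lemma hop_const_assocr op op' x y z n :
    (forall i, bilinear_op (op i)) -> (forall i, bilinear_op (op' i)) ->
  hop op (hconst x) (hop op' (hconst y) (hconst z)) n
    = \sum_(i < n.+1) op i x (op' (n - i)%N y z).
Proof. by move=> opB op'B; rewrite hop_constl //; under eq_bigr do rewrite hop_const //. Qed.

End ConstantSeries.

Section Deformation.
Variables (F : fieldType) (A : lmodType F).
Variables (mul : A -> A -> A) (rt lt : nat -> A -> A -> A).
Hypothesis deformation : diass_formal_deformation mul rt lt.
Implicit Types x y z : A.

Definition bracket x y := rt 1%N x y - lt 1%N y x.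

Let rt_bilinear : forall i, bilinear_op (rt i).
Proof. by case: deformation. Qed.

Let lt_bilinear : forall i, bilinear_op (lt i).
Proof. by case: deformation. Qed.

Let mul_bilinear : bilinear_op mul.
Proof.
case: deformation => /(_ 0%N) [rt0l rt0r] _ rt0 _ _.
by split=> a x y z; rewrite -!rt0; [apply: rt0l | apply: rt0r].
Qed.

Lemma deformation_coef n x y z :
  [/\ \sum_(i < n.+1) rt i (rt (n - i)%N x y) z = \sum_(i < n.+1) rt i x (rt (n - i)%N y z),
      \sum_(i < n.+1) lt i (lt (n - i)%N x y) z = \sum_(i < n.+1) lt i x (lt (n - i)%N y z),
      \sum_(i < n.+1) lt i (lt (n - i)%N x y) z = \sum_(i < n.+1) lt i x (rt (n - i)%N y z),
      \sum_(i < n.+1) lt i (rt (n - i)%N x y) z = \sum_(i < n.+1) rt i x (lt (n - i)%N y z)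
    & \sum_(i < n.+1) rt i (lt (n - i)%N x y) z = \sum_(i < n.+1) rt i x (rt (n - i)%N y z)].
Proof.
case: deformation => _ _ _ _ /(_ (hconst x) (hconst y) (hconst z)) [E1 E2 E3 E4 E5].
by split; [move: E1 | move: E2 | move: E3 | move: E4 | move: E5];
  move/(congr1 (@^~ n)); rewrite hop_const_assocl // hop_const_assocr.
Qed.

Lemma deformation_order1 x y z :
  [/\ mul (rt 1%N x y) z + rt 1%N (mul x y) z = mul x (rt 1%N y z) + rt 1%N x (mul y z),
      mul z (lt 1%N x y) + lt 1%N (mul y x) z = mul (lt 1%N y z) x + lt 1%N x (mul z y),
      mul z (lt 1%N x y) + lt 1%N (mul y x) z = mul (rt 1%N y z) x + lt 1%N x (mul y z),
      mul z (rt 1%N x y) + lt 1%N (mul x y) z = mul x (lt 1%N y z) + rt 1%N x (mul z y)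
    & mul (lt 1%N x y) z + rt 1%N (mul y x) z = mul x (rt 1%N y z) + rt 1%N x (mul y z)].
Proof.
case: deformation => _ _ rt0 lt0 _.
have [] := deformation_coef 1 x y z.
by rewrite !big_ord_recr !big_ord0 /= !subn0 !add0r !rt0 !lt0 => *; split.
Qed.

Lemma deformation_order2 x y z :
  [/\ mul (rt 2%N x y) z + rt 1%N (rt 1%N x y) z + rt 2%N (mul x y) z
      = mul x (rt 2%N y z) + rt 1%N x (rt 1%N y z) + rt 2%N x (mul y z),
      mul z (lt 2%N x y) + lt 1%N (lt 1%N x y) z + lt 2%N (mul y x) z
      = mul (lt 2%N y z) x + lt 1%N x (lt 1%N y z) + lt 2%N x (mul z y),
      mul z (lt 2%N x y) + lt 1%N (lt 1%N x y) z + lt 2%N (mul y x) z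
      = mul (rt 2%N y z) x + lt 1%N x (rt 1%N y z) + lt 2%N x (mul y z),
      mul z (rt 2%N x y) + lt 1%N (rt 1%N x y) z + lt 2%N (mul x y) z
      = mul x (lt 2%N y z) + rt 1%N x (lt 1%N y z) + rt 2%N x (mul z y)
    & mul (lt 2%N x y) z + rt 1%N (lt 1%N x y) z + rt 2%N (mul y x) z
      = mul x (rt 2%N y z) + rt 1%N x (rt 1%N y z) + rt 2%N x (mul y z)].
Proof.
case: deformation => _ _ rt0 lt0 _.
have [] := deformation_coef 2 x y z.
by rewrite !big_ord_recr !big_ord0 /= !subn0 !subSnn !subnn !add0r !rt0 !lt0 => *; split.
Qed.

Let distrB := (bilinear_opBl mul_bilinear, bilinear_opBr mul_bilinear,
  bilinear_opBl (rt_bilinear 1), bilinear_opBr (rt_bilinear 1),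
  bilinear_opBl (lt_bilinear 1), bilinear_opBr (lt_bilinear 1)).

Lemma bracket_bilinear : bilinear_op bracket.
Proof. exact: bilinear_opB (rt_bilinear 1) (bilinear_op_flip (lt_bilinear 1)). Qed.

Lemma bracket_jacobi x y z :
  bracket x (bracket y z) = bracket (bracket x y) z + bracket y (bracket x z).
Proof.
have [_ D2zyx _ _ _] := deformation_order2 z y x.
have [_ _ _ _ D5yxz] := deformation_order2 y x z.
have [_ _ _ D4xzy _] := deformation_order2 x z y.
have [_ _ D3zxy _ _] := deformation_order2 z x y.
have [D1xyz _ _ _ _] := deformation_order2 x y z.
have [_ _ _ D4yzx _] := deformation_order2 y z x.
rewrite /bracket !distrB.
by move: D2zyx D5yxz D4xzy (esym D3zxy) (esym D1xyz) (esym D4yzx); sum_eqs.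
Qed.

Lemma bracket_mulr x y z :
  bracket x (mul y z) = mul (bracket x y) z + mul y (bracket x z).
Proof.
have [D1xyz _ _ _ _] := deformation_order1 x y z.
have [_ _ _ _ D5yxz] := deformation_order1 y x z.
have [_ _ _ D4yzx _] := deformation_order1 y z x.
rewrite /bracket !distrB.
by move: (esym D1xyz) D5yxz (esym D4yzx); sum_eqs.
Qed.

Lemma bracket_mull x y z :
  bracket (mul x y) z = mul x (bracket y z) + mul y (bracket x z).
Proof.
have [_ _ D3zxy _ _] := deformation_order1 z x y.
have [D1xyz _ _ _ _] := deformation_order1 x y z.
have [_ _ _ D4xzy _] := deformation_order1 x z y.
rewrite /bracket !distrB.
by move: D3zxy D1xyz (esym D4xzy); sum_eqs.
Qed.

Lemma mul_bracket_skew x y z : mul (bracket x y) z = - mul (bracket y x) z.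
Proof.
have [D1xyz _ _ _ D5xyz] := deformation_order1 x y z.
have [D1yxz _ _ _ D5yxz] := deformation_order1 y x z.
rewrite /bracket !distrB.
by move: D1xyz (esym D5yxz) D1yxz (esym D5xyz); sum_eqs.
Qed.

End Deformation.

Theorem theorem2p25 (F : fieldType) (A : lmodType F)
  (charF0 : [pchar F] =i pred0)
  (mul : A -> A -> A) (rt lt : nat -> A -> A -> A) :
  permutative mul ->
  diass_formal_deformation mul rt lt ->
  dual_pre_Poisson mul (fun x y => rt 1%N x y - lt 1%N y x).
Proof.
move=> perm_mul deformation; split.
- split; [exact: perm_mul | exact: bracket_bilinear deformation].
- exact: bracket_jacobi deformation.
- exact: bracket_mulr deformation.
- exact: bracket_mull deformation.
- exact: mul_bracket_skew deformation.
Qed.
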